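(* Let $P$ be a finite geometric lattice of rank $n$ with a fixed atom ordering, $S=\{s_1<\dots<s_k\}\subseteq\{1,\dots,n-1\}$, and let $F$ be a standard filling of $\mathrm{Rib}(s_1,s_2-s_1,\dots,n-s_k)$ whose reading word is an $\mathrm{NBC}^+$ basis of $P$. Then the summands $\mathrm{sgn}(\sigma)\,\bar f_{chain}(\{\sigma F\})$, $\sigma\in\mathrm{Col}_F$, appearing in $\bar f_{chain}(v_F)$ are distinct maximal chains of $P^S$; that is, $\bar f_{chain}(\{\sigma F\})\ne\bar f_{chain}(\{\sigma' F\})$ for distinct $\sigma,\sigma'\in\mathrm{Col}_F$.
   Context: $A(x)$ is the set of atoms below $x$. NBC independent set: atoms $\{b_1,\dots,b_l\}$ whose join has rank $l$ and such that every atom outside the set below the join is later in the order than some $b_j$. $\mathrm{NBC}^+$ basis: ordered NBC independent set $(b_1,\dots,b_n)$, $n=\mathrm{rk}(P)$, with $b_j=\min(A(b_1\vee\dots\vee b_j)\setminus A(b_1\vee\dots\vee b_{j-1}))$. $\mathrm{Rib}(r_1,\dots,r_p)$: ribbon with rows of lengths $r_1,\dots,r_p$ bottom to top, each row starting directly above the last box of the row below; reading word: left to right, bottom row to top; standard: entries increase in atom order along rows left to right and down columns top to bottom. $\mathrm{Col}_F$: permutations of the entries preserving each column. Tabloid $\{F\}$: $F$ modulo permuting entries within rows; $v_F=\sum_{\sigma\in\mathrm{Col}_F}\mathrm{sgn}(\sigma)\{\sigma F\}$. $P^S$: elements with rank in $S$. For reading word $(F_1,\dots,F_n)$, $\bar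 f_{chain}(\{F\})$ is the chain $F_1\vee\dots\vee F_{s_1}<\dots<F_1\vee\dots\vee F_{s_k}$ in $P^S$, extended linearly. *)

From HB Require Import structures.
From mathcomp Require Import all_boot all_order all_fingroup.
Set Implicit Arguments. Unset Strict Implicit. Unset Printing Implicit Defensive.
Import Order.TTheory.
Local Open Scope order_scope.

Section Lattice.
Context {d : Order.disp_t} {P : finTBLatticeType d}.

Definition covers (x y : P) : bool :=
  (x < y) && [forall z : P, ~~ ((x < z) && (z < y))].

Definition atom (a : P) : bool := covers \bot a.

(* rk is the rank function of P (exists iff P is graded; then it is unique) *)
Definition is_rank_fun (rk : P -> nat) : Prop :=
  rk \bot = 0%N /\ (forall x y : P, covers x y -> rk y = (rk x).+1).

Definition geometric (rk : P -> nat) : Prop :=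
  [/\ is_rank_fun rk,
      (forall x y : P, (rk (x `|` y) + rk (x `&` y) <= rk x + rk y)%N) &
      (forall x : P, x = \join_(a : P | atom a && (a <= x)) a)].

Definition atoms_below (x : P) : {set P} := [set a : P | atom a && (a <= x)].

(* the fixed atom ordering is given by an injective (on atoms) w : P -> nat;
   atom a is earlier than atom b iff w a < w b *)

Definition NBC_indep (rk : P -> nat) (w : P -> nat) (B : {set P}) : Prop :=
  let J := \join_(b in B) b in
  [/\ {subset B <= atom},
      rk J = #|B| &
      forall a : P, a \in atoms_below J -> a \notin B ->
        exists2 b, b \in B & (w b < w a)%N].

Definition NBCplus_basis (rk : P -> nat) (w : P -> nat) (n : nat)
    (b : 'I_n -> P) : Prop :=
  [/\ rk \top = n,
      injective b,
      NBC_indep rk w [set b i | i : 'I_n] &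
      forall j : 'I_n,
        let D := atoms_below (\join_(i < n | (i <= j)%N) b i)
                   :\: atoms_below (\join_(i < n | (i < j)%N) b i) in
        b j \in D /\ (forall a, a \in D -> (w (b j) <= w a)%N)].

(* Ribbon Rib(s_1, s_2 - s_1, ..., n - s_k), cells numbered 0..n-1 in reading
   order (left to right, bottom row to top).  Cell i lies in row
   rib_row S i = #{s in S | s <= i} (rows numbered from 0, bottom to top),
   and, since row j+1 starts directly above the last box of row j, in column
   rib_col S i = (start column of its row) + (offset in row) = i - rib_row S i. *)
Definition rib_row (S : seq nat) (i : nat) : nat := count (fun s => s <= i)%N S.
Definition rib_col (S : seq nat) (i : nat) : nat := (i - rib_row S i)%N.

Definition standard_filling (w : P -> nat) (S : seq nat) (n : nat)
    (F : 'I_n -> P) : Prop :=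
  forall i j : 'I_n, (i < j)%N ->
    (rib_row S i = rib_row S j -> (w (F i) < w (F j))%N) /\
    (rib_col S i = rib_col S j -> (w (F j) < w (F i))%N).

Definition ColF (S : seq nat) (n : nat) : {set {perm 'I_n}} :=
  [set s : {perm 'I_n} | [forall i : 'I_n, rib_col S (s i) == rib_col S i]].

Definition act_filling n (s : {perm 'I_n}) (F : 'I_n -> P) : 'I_n -> P :=
  fun i => F (s i).

Definition fchain (S : seq nat) n (G : 'I_n -> P) : seq P :=
  [seq \join_(i < n | (i < s)%N) G i | s <- S].

Definition maximal_chain_PS (rk : P -> nat) (S : seq nat) (c : seq P) : Prop :=
  [/\ size c = size S,
      forall j, (j < size S)%N -> rk (nth \bot c j) = nth 0%N S j &
      sorted (fun x y => x < y) c].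

End Lattice.

From mathcomp Require Import all_boot all_order all_fingroup.
Import Order.TTheory.
Local Open Scope order_scope.

(** The reading word of an NBC+ basis consists of n atoms whose join has
    rank n.  By semimodularity such atoms are independent: the join of any
    k of them has rank k, and distinct subsets have distinct joins.  The
    element of rank s in the chain of the tabloid {σF} is the join of the
    entries in the first s cells of σF, so the chain records the row of σF
    in which each entry sits; as σ preserves columns and a cell of a ribbon
    is determined by its row and column, the chain determines σ.  Neither
    the standardness of F nor the atom ordering plays any role. *)

Section IndependentAtoms.
Context {d : Order.disp_t} {P : finTBLatticeType d} {rk : P -> nat}.
Hypothesis rk_rank : is_rank_fun rk.
Hypothesis rk_submod :
  forall x y : P, (rk (x `|` y) + rk (x `&` y) <= rk x + rk y)%N.

Lemma rk_atom (a : P) : atom a -> rk a = 1%N.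
Proof. by case: rk_rank => rk0 rkS /rkS; rewrite rk0. Qed.

Lemma rk_join_le (x y : P) : (rk (x `|` y) <= rk x + rk y)%N.
Proof. exact: leq_trans (leq_addr _ _) (rk_submod x y). Qed.

Context {I : finType} {F : I -> P}.
Hypothesis F_atom : forall i, atom (F i).

Local Notation J A := (\join_(i in A) F i).

Lemma rk_joins_le (A : {set I}) : (rk (J A) <= #|A|)%N.
Proof.
rewrite -big_enum cardE; elim: (enum A) => [|a r IH].
  by rewrite big_nil; case: rk_rank => ->.
by rewrite big_cons; apply: leq_trans (rk_join_le _ _) _; rewrite rk_atom.
Qed.

Hypothesis F_spanning : rk (\join_i F i) = #|I|.

Lemma rk_joins_indep (A : {set I}) : rk (J A) = #|A|.
Proof.
apply/eqP; rewrite eqn_leq rk_joins_le /= -(leq_add2r #|~: A|).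
have splitT : \join_i F i = J A `|` J (~: A).
  by rewrite -joins_setU setUCr; apply: eq_bigl => i; rewrite inE.
rewrite cardsC -F_spanning splitT; apply: leq_trans (rk_join_le _ _) _.
by rewrite leq_add2l rk_joins_le.
Qed.

Lemma atom_le_joins_indep (A : {set I}) k : (F k <= J A) = (k \in A).
Proof.
apply/idP/idP => [leFA|kA]; last exact: (joins_sup F (P := mem A) kA).
apply/negPn/negP => kA.
have : J (k |: A) = J A by rewrite joins_setU big_set1 join_r.
by move/(congr1 rk); rewrite !rk_joins_indep cardsU1 kA add1n => /esym/n_Sn.
Qed.

Lemma joins_indep_inj : injective (fun A : {set I} => J A).
Proof.
move=> A B /= eqAB; apply/setP => k.
by rewrite -!atom_le_joins_indep eqAB.
Qed.

Lemma joins_indep_lt (A B : {set I}) : A \proper B -> J A < J B.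
Proof.
case/andP => subAB notsubBA; rewrite lt_def le_joins // andbT.
by apply: contraNneq notsubBA => /joins_indep_inj ->.
Qed.

End IndependentAtoms.

Lemma NBCplus_basis_indep {d : Order.disp_t} {P : finTBLatticeType d}
    (rk w : P -> nat) n (b : 'I_n -> P) :
  NBCplus_basis rk w b -> (forall i, atom (b i)) /\ rk (\join_i b i) = n.
Proof.
case=> _ b_inj [b_atom rk_b _] _; split=> [i|].
  by apply: b_atom; apply: imset_f.
have card_b : #|[set b i | i : 'I_n]| = n by rewrite card_imset // card_ord.
rewrite -[RHS]card_b -rk_b /= big_imset /=; last by move=> i j _ _ /b_inj.
by apply: congr1; apply: eq_bigl => i; rewrite inE.
Qed.

Section Ribbon.
Context {S : seq nat}.
Hypotheses (S_sorted : sorted ltn S) (S_pos : all (fun s => 0 < s)%N S).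

Lemma rib_row_le i : (rib_row S i <= i)%N.
Proof.
rewrite /rib_row -size_filter -[X in (_ <= X)%N](size_iota 1).
apply: uniq_leq_size; first exact/filter_uniq/(sorted_uniq ltn_trans ltnn).
move=> s; rewrite mem_filter mem_iota => /andP [si sS].
by rewrite (allP S_pos s sS) add1n ltnS.
Qed.

Lemma rib_cellE i : (rib_col S i + rib_row S i)%N = i.
Proof. exact/subnK/rib_row_le. Qed.

Context {n : nat}.

Lemma ColF_col (s : {perm 'I_n}) i :
  s \in ColF S n -> rib_col S (s i) = rib_col S i.
Proof. by rewrite inE => /forallP /(_ i) /eqP. Qed.

Lemma ColFV (s : {perm 'I_n}) : s \in ColF S n -> (s^-1)%g \in ColF S n.
Proof.
move=> sC; rewrite inE; apply/forallP => i.
by rewrite -{2}(permKV s i) (ColF_col _ _ sC).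
Qed.

Lemma ColF_inj_rows (u v : {perm 'I_n}) :
  u \in ColF S n -> v \in ColF S n ->
  (forall i, rib_row S (u i) = rib_row S (v i)) -> u = v.
Proof.
move=> uC vC eq_row; apply/permP => i; apply: val_inj.
by rewrite -[LHS]rib_cellE -[RHS]rib_cellE eq_row !ColF_col.
Qed.

End Ribbon.

Section FillingChain.
Context {d : Order.disp_t} {P : finTBLatticeType d} {n : nat} (F : 'I_n -> P).

Definition entries_before (s : {perm 'I_n}) x : {set 'I_n} :=
  [set k | ((s^-1)%g k < x)%N].

Lemma card_entries_before s x : (x <= n)%N -> #|entries_before s x| = x.
Proof.
move=> xn; set first := [set i : 'I_n | (i < x)%N].
have -> : entries_before s x = (s^-1)%g @^-1: first.
  by apply/setP => k; rewrite !inE.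
rewrite card_preimset; last exact: perm_inj.
have -> : first = [set widen_ord xn i | i in 'I_x].
  apply/setP => i; rewrite inE.
  apply/idP/imsetP => [ix | [j _ ->]] /=; last exact: ltn_ord.
  by exists (Ordinal ix) => //; apply: val_inj.
by rewrite card_imset ?card_ord // => i j /(congr1 val) /= ij; exact: val_inj.
Qed.

Lemma entries_before_proper s x y :
  (x < y <= n)%N -> entries_before s x \proper entries_before s y.
Proof.
case/andP => xy yn; rewrite properEcard !card_entries_before ?xy ?andbT //.
  by apply/subsetP => k; rewrite !inE => /ltn_trans; apply.
exact: leq_trans (ltnW xy) yn.
Qed.

Lemma joins_act_filling s x :
  \join_(i < n | (i < x)%N) act_filling s F i
  = \join_(k in entries_before s x) F k.
Proof.
rewrite [RHS](reindex_inj (@perm_inj _ s)) /=; apply: eq_bigl => i.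
by rewrite inE permK.
Qed.

End FillingChain.

Theorem proposition5p35 (d : Order.disp_t) (P : finTBLatticeType d)
  (rk : P -> nat) (w : P -> nat) (n : nat) (S : seq nat) (F : 'I_n -> P) :
  geometric rk ->
  {in atom &, injective w} ->
  rk Order.top = n ->
  sorted ltn S ->
  all (fun s => (0 < s < n)%N) S ->
  standard_filling w S F ->
  NBCplus_basis rk w F ->
  (forall s : {perm 'I_n}, s \in ColF S n ->
      maximal_chain_PS rk S (fchain S (act_filling s F))) /\
  {in ColF S n &, injective (fun s : {perm 'I_n} => fchain S (act_filling s F))}.
Proof.
move=> [rk_rank rk_submod _] _ _ S_sorted S_bounds _ /NBCplus_basis_indep.
rewrite -[n in _ = n]card_ord => -[F_atom F_spanning].
have S_pos : all (fun s => 0 < s)%N S by apply: sub_all S_bounds => s /andP [].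
have S_le_n s : s \in S -> (s <= n)%N.
  by move/(allP S_bounds)/andP => [_ /ltnW].
split=> [s _ | s t sC tC /= eq_chain].
  split=> [|j jS|]; first by rewrite size_map.
    rewrite (nth_map 0%N) // joins_act_filling rk_joins_indep //.
    by rewrite card_entries_before // S_le_n ?mem_nth.
  apply: (homo_sorted_in (P := mem S)) S_sorted; last exact: allss.
  move=> x y xS yS xy.
  rewrite !joins_act_filling.
  apply: (joins_indep_lt rk_rank rk_submod F_atom F_spanning).
  by apply: entries_before_proper; rewrite (xy : (x < y)%N) S_le_n.
have eq_entries x : x \in S -> entries_before s x = entries_before t x.
  move=> xS; apply: (joins_indep_inj rk_rank rk_submod F_atom F_spanning).
  by rewrite /= -!joins_act_filling; apply: (eq_in_map _ _ _).2 eq_chain x xS.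
apply: invg_inj.
apply: (ColF_inj_rows S_sorted S_pos _ _ (ColFV _ sC) (ColFV _ tC)).
move=> k; apply: eq_in_count => x xS /=.
move/setP/(_ k): (eq_entries x xS); rewrite !inE => eq_lt.
by rewrite leqNgt eq_lt -leqNgt.
Qed.
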